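(* Let $\Pi$ be an $n$-dimensional linear space satisfying the exchange axiom and the axiom (P2), let $0<k<n-1$, let $B=\{p_1,\dots,p_{n+1}\}$ be a base of $\Pi$, let $\mathcal{B}_k$ be the base subset of $\mathcal{G}_k(\Pi)$ associated with $B$, and put $m=\max\{k,n-k-1\}$. Two distinct elements $U,U'$ of $\mathcal{B}_k$ are adjacent if and only if there exists a regular collection $\mathcal{R}^1,\dots,\mathcal{R}^m$ of $m$ complement subsets of $\mathcal{B}_k$ such that $U$ and $U'$ belong to each $\mathcal{R}^i$, $i=1,\dots,m$.
   Context: A linear space $\Pi=(P,\mathcal{L})$ is a set $P$ of points with a family $\mathcal{L}$ of proper subsets (lines) such that each line has at least two points and any two distinct points $p,q$ lie on exactly one line $pq$. A subspace is a set $S\subset P$ with $pq\subset S$ for all distinct $p,q\in S$; $\overline{X}$ is the smallest subspace containing $X$. A set $X$ is independent if $\overline{X}$ is not spanned by a proper subset of $X$; a base of $\Pi$ is an independent set spanning $P$. A subspace is $m$-dimensional if $m+1$ is the smallest number of points spanning it. Exchange axiom: for every $X\subset P$ and $p_1,p_2\in P\setminus\overline{X}$, $p_2\in\overline{X\cup\{p_1\}}$ implies $p_1\in\overline{X\cup\{p_2\}}$. Axiom (P2): every line has at least three points. $\mathcal{G}_k(\Pi)$ is the set of $k$-dimensional subspaces; two of them are adjacent if their intersection is $(k-1)$-dimensional. The base subset of $\mathcal{G}_k(\Pi)$ associated with a base $B$ is the set of all $k$-dimensional subspaces spanned by points of $B$. A subset $\mathcal{R}\subset\mathcal{B}_k$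 is exact if $\mathcal{B}_k$ is the unique base subset of $\mathcal{G}_k(\Pi)$ containing $\mathcal{R}$, and inexact otherwise. A complement subset of $\mathcal{B}_k$ is a set $\mathcal{R}\subset\mathcal{B}_k$ such that $\mathcal{B}_k\setminus\mathcal{R}$ is a maximal (under inclusion) inexact subset of $\mathcal{B}_k$. A collection $\mathcal{R}^1,\dots,\mathcal{R}^{m+1}$ of $m+1$ complement subsets is regular if $\mathcal{R}^1\cap\dots\cap\mathcal{R}^{m+1}$ consists of exactly one element; a collection of $m$ complement subsets is regular if it can be extended (by one more complement subset) to a regular collection of $m+1$ complement subsets. *)

From mathcomp Require Import all_boot.
Set Implicit Arguments. Unset Strict Implicit. Unset Printing Implicit Defensive.

Section LinearSpaces.
Variable P : Type.
Variable L : (P -> Prop) -> Prop.   (* the family of lines *)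

Definition subset {T} (A B : T -> Prop) := forall x, A x -> B x.
Definition seteq {T} (A B : T -> Prop) := forall x, A x <-> B x.

Definition is_linear_space : Prop :=
  (forall l, L l -> exists x, ~ l x) /\
  (forall l, L l -> exists p q, p <> q /\ l p /\ l q) /\
  (forall p q, p <> q -> exists l, L l /\ l p /\ l q /\
      forall l', L l' -> l' p -> l' q -> l' = l).

Definition is_subspace (S : P -> Prop) : Prop :=
  forall l, L l -> forall p q, p <> q -> S p -> S q -> l p -> l q ->
    forall x, l x -> S x.

Definition closure (X : P -> Prop) : P -> Prop :=
  fun p => forall S, is_subspace S -> subset X S -> S p.

Definition independent (X : P -> Prop) : Prop :=
  forall Y, subset Y X -> (exists x, X x /\ ~ Y x) -> closure Y <> closure X.

Definition is_base (B : P -> Prop) : Prop :=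
  independent B /\ closure B = (fun _ => True).

Definition range_of {I} (f : I -> P) : P -> Prop := fun x => exists i, f i = x.

Definition is_dim (S : P -> Prop) (m : nat) : Prop :=
  is_subspace S /\
  (exists f : 'I_m.+1 -> P, closure (range_of f) = S) /\
  (forall j (g : 'I_j -> P), j <= m -> closure (range_of g) <> S).

Definition exchange_axiom : Prop :=
  forall (X : P -> Prop) p1 p2, ~ closure X p1 -> ~ closure X p2 ->
    closure (fun x => X x \/ x = p1) p2 -> closure (fun x => X x \/ x = p2) p1.

Definition axiom_P2 : Prop :=
  forall l, L l -> exists a b c, l a /\ l b /\ l c /\ a <> b /\ a <> c /\ b <> c.

Definition adjacent (k : nat) (U U' : P -> Prop) : Prop :=
  is_dim (fun x => U x /\ U' x) k.-1.

Definition family := (P -> Prop) -> Prop.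

Definition base_subset (k : nat) (B : P -> Prop) : family :=
  fun U => is_dim U k /\ exists X, subset X B /\ closure X = U.

Definition exact (k : nat) (Bk R : family) : Prop :=
  subset R Bk /\
  forall B', is_base B' -> subset R (base_subset k B') -> seteq (base_subset k B') Bk.

Definition inexact (k : nat) (Bk R : family) : Prop :=
  subset R Bk /\ ~ exact k Bk R.

Definition complement_subset (k : nat) (Bk R : family) : Prop :=
  subset R Bk /\
  let C := fun U => Bk U /\ ~ R U in
  inexact k Bk C /\
  (forall S, subset C S -> subset S Bk -> (exists U, S U /\ ~ C U) -> ~ inexact k Bk S).

Definition regular_succ (k m : nat) (Bk : family) (Rs : 'I_m.+1 -> family) : Prop :=
  (forall i, complement_subset k Bk (Rs i)) /\
  (forall i j, Rs i = Rs j -> i = j) /\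
  exists U, forall V, (forall i, Rs i V) <-> V = U.

(* collection of m complement subsets extendable to a regular collection of m+1 *)
Definition regular (k m : nat) (Bk : family) (Rs : 'I_m -> family) : Prop :=
  (forall i, complement_subset k Bk (Rs i)) /\
  (forall i j, Rs i = Rs j -> i = j) /\
  exists R, regular_succ k Bk
    (fun i : 'I_m.+1 => match unlift ord_max i with
                        | Some j => Rs j | None => R end).

End LinearSpaces.

From Pilot Require Import Defs.
From mathcomp Require Import all_boot zify.
From Stdlib Require Import Classical ClassicalEpsilon FunctionalExtensionality PropExtensionality.
Set Implicit Arguments. Unset Strict Implicit. Unset Printing Implicit Defensive.

(* Write <Z> for the span of the base points p_i, i in Z.  The base subset is
   {<Z> : |Z| = k+1}, and its complement subsets are exactly the sets
   [a,b] = {<Z> : a in Z, b notin Z} with a <> b ([in_out a b] below): the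
   complement of [a,b] is inexact, because replacing p_a by a third point of the
   line p_a p_b gives a base whose base subset contains it, while any larger set
   separates every pair of base points and is therefore exact.  Hence a regular
   collection [a_i,b_i] pins down one (k+1)-set Z, the only one containing all
   a_i and no b_i.  If <X> and <X'> lie in the first m members, then all a_i
   but one lie in X :&: X' and all b_i but one lie outside X :|: X'; unless
   |X :&: X'| = k there are too few of them to prevent exchanging a point of Z
   for one outside Z.  Conversely, if |X :&: X'| = k, then m distinct pairs in
   (X :&: X') x ~: (X :|: X') covering X :&: X', followed by a pair (x, o) with
   x in X :\: X', pin down X. *)


Lemma seteq_eq T (A B : T -> Prop) : seteq A B -> A = B.
Proof.
by move=> AB; apply: functional_extensionality => x; apply: propositional_extensionality.
Qed.

Section Closure.
Variables (P : Type) (L : (P -> Prop) -> Prop).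
Local Notation cl := (Defs.closure L).

Lemma subset_closure X : Defs.subset X (cl X).
Proof. by move=> x Xx S _; apply. Qed.

Lemma closure_subspace X : is_subspace L (cl X).
Proof.
move=> l Ll a b ab ha hb la lb x lx S hS XS.
exact: (hS l Ll a b ab (ha S hS XS) (hb S hS XS) la lb).
Qed.

Lemma closure_min S X : is_subspace L S -> Defs.subset X S -> Defs.subset (cl X) S.
Proof. by move=> hS XS x; apply. Qed.

Lemma closure_sub_closure X Y : Defs.subset X (cl Y) -> Defs.subset (cl X) (cl Y).
Proof. by apply: closure_min; apply: closure_subspace. Qed.

Lemma closureS X Y : Defs.subset X Y -> Defs.subset (cl X) (cl Y).
Proof. by move=> XY; apply: closure_sub_closure => x /XY; apply: subset_closure. Qed.

Lemma closure_empty X x : (forall y, ~ X y) -> ~ cl X x.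
Proof. by move=> hX /(_ (fun _ => False)); apply => // l _ a b _ []. Qed.

Lemma closure_finite X z : cl X z ->
  exists s : seq P, (forall x, List.In x s -> X x) /\ cl (fun x => List.In x s) z.
Proof.
apply: (closure_min (S := fun z => exists s : seq P,
  (forall x, List.In x s -> X x) /\ cl (fun x => List.In x s) z)).
  move=> l Ll a b ab [s1 [h1 c1]] [s2 [h2 c2]] la lb x lx.
  exists (s1 ++ s2); split=> [y hy|].
    by case: (List.in_app_or _ _ _ hy) => [/h1|/h2].
  apply: (closure_subspace Ll ab _ _ la lb lx).
    by apply: closureS c1 => y hy; apply: List.in_or_app; left.
  by apply: closureS c2 => y hy; apply: List.in_or_app; right.
move=> x Xx; exists [:: x]; split; first by move=> y [<-|[]].
by apply: subset_closure; left.
Qed.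

Lemma independent_notin_closure B Y x : independent L B -> B x ->
  Defs.subset Y (fun y => B y /\ y <> x) -> ~ cl Y x.
Proof.
move=> hB Bx YB clx; apply: (hB (fun y => B y /\ y <> x)) => [y []//||].
  by exists x; split=> // - [].
apply: seteq_eq => z; split; first by apply: closureS => y [].
apply: closure_sub_closure => y By.
have [->|ne] := classic (y = x); first exact: closureS clx.
exact: subset_closure.
Qed.

Lemma independent_intro C :
  (forall x, C x -> ~ cl (fun y => C y /\ y <> x) x) -> independent L C.
Proof.
move=> hC Y YC [x [Cx nYx]] eY; apply: (hC x Cx).
have : cl C x by apply: subset_closure.
by rewrite -eY; apply: closureS => y Yy; split; [apply: YC | move=> e; subst].
Qed.

Lemma independentS B C : independent L B -> Defs.subset C B -> independent L C.
Proof.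
move=> hB CB; apply: independent_intro => x Cx.
by apply: independent_notin_closure hB (CB x Cx) _ => y [/CB].
Qed.

Hypothesis hEx : exchange_axiom L.

Lemma independentU1 B q : independent L B -> ~ cl B q ->
  independent L (fun x => B x \/ x = q).
Proof.
move=> hB nBq; apply: independent_intro => x [Bx|->] hx; last first.
  by apply: nBq; apply: closureS hx => y [[By|->] //].
have nqx : q <> x by move=> e; apply: nBq; rewrite e; apply: subset_closure.
set A := fun y => B y /\ y <> x.
have nAx : ~ cl A x by apply: independent_notin_closure hB Bx _.
have nAq : ~ cl A q by move=> /(closureS (fun y (h : A y) => h.1)).
have hAqx : cl (fun y => A y \/ y = q) x.
  by apply: closureS hx => y [[By|->] ne]; [left|right].
apply: nBq; apply: closure_sub_closure (hEx nAq nAx hAqx) => y [[By _]|->];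
  exact: subset_closure.
Qed.

(* Peel off the generators of [z] outside [Y] one at a time: one that cannot be
   dropped would, by exchange, lie in the span of the other points of [B]. *)
Lemma closureI_independent B X Y z : independent L B ->
  Defs.subset X B -> Defs.subset Y B ->
  cl X z -> cl Y z -> cl (fun x => X x /\ Y x) z.
Proof.
move=> hB XB YB /closure_finite [s [sX cs]] cY.
set W := fun x => X x /\ Y x.
suff: forall s, (forall x, List.In x s -> X x) ->
    cl (fun x => List.In x s \/ W x) z -> cl W z.
  by move=> /(_ s sX); apply; apply: closureS cs => x; left.
elim=> [|x t IH] hs hz; first by apply: closureS hz => y [[]|].
have hs' y : List.In y t -> X y by move=> ?; apply: hs; right.
have [Yx|nYx] := classic (Y x).
  apply: (IH hs'); apply: closureS hz => y [[<-|hy]|hy]; [|left|right] => //.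
  by right; split=> //; apply: hs; left.
set A := fun y => (List.In y t /\ y <> x) \/ W y.
have [hAz|hAz] := classic (cl A z).
  by apply: (IH hs'); apply: closureS hAz => y [[]|]; [left|right].
have hxA : Defs.subset (fun y => List.In y (x :: t) \/ W y) (fun y => A y \/ y = x).
  move=> y [[<-|hy]|hy]; [by right| |by left; right].
  by have [->|ne] := classic (y = x); [right|left; left].
have [hAx|hAx] := classic (cl A x).
  case: hAz; apply: (closure_sub_closure _ (closureS hxA hz)).
  by move=> y [/subset_closure|->].
have hxz := hEx hAx hAz (closureS hxA hz).
have Bx : B x by apply/XB/hs; left.
exfalso; apply: (independent_notin_closure (Y := fun y => A y \/ Y y) hB Bx).
  move=> y [[[/hs' /XB By ne]|[_ Yy]]|Yy] //.
    by split; [apply: YB | move=> e; subst].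
  by split; [apply: YB | move=> e; subst].
apply: (closure_sub_closure _ hxz) => y [Ay|->]; first by apply: subset_closure; left.
by apply: closureS cY => y0; right.
Qed.

Lemma exchange_in_list (G : seq P) A y :
  cl (fun x => A x \/ List.In x G) y -> ~ cl A y ->
  exists G1 g G2, G = G1 ++ g :: G2 /\
    cl (fun x => A x \/ List.In x (G1 ++ G2) \/ x = y) g.
Proof.
elim: G => [|g G IH] hy hA.
  by case: hA; apply: closureS hy => x [|[]].
have [hyG|hyG] := classic (cl (fun x => A x \/ List.In x G) y).
  have [G1 [g' [G2 [-> hg]]]] := IH hyG hA.
  exists (g :: G1), g', G2; split=> //.
  by apply: closureS hg => x [hx|[hx|hx]]; [left|right; left; right|right; right].
have [hgG|hgG] := classic (cl (fun x => A x \/ List.In x G) g).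
  case: hyG; apply: (closure_sub_closure _ hy).
  by move=> x [hx|[<-|hx]] //; apply: subset_closure; [left|right].
have hyg : cl (fun x => (A x \/ List.In x G) \/ x = g) y.
  by apply: closureS hy => x [hx|[<-|hx]]; [left; left|right|left; right].
exists [::], g, G; split=> //.
by apply: closureS (hEx hgG hyG hyg) => x [[hx|hx]|hx]; [left|right; left|right; right].
Qed.

Lemma steinitz (T : eqType) (p : T -> P) (s : seq T) A G : uniq s ->
  (forall i, i \in s ->
     ~ cl (fun x => A x \/ exists2 j, j \in s & j != i /\ p j = x) (p i)) ->
  (forall i, i \in s -> cl (fun x => A x \/ List.In x G) (p i)) ->
  size s <= size G.
Proof.
elim: s A G => [|i s IH] A G //= /andP [nis us] hind hspan.
have hAi : ~ cl A (p i).
  by move=> h; apply: (hind i (mem_head _ _)); apply: closureS h => x; left.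
have [G1 [g [G2 [eG hg]]]] := exchange_in_list (hspan i (mem_head _ _)) hAi.
suff: size s <= size (G1 ++ G2) by rewrite eG !size_cat /= addnS ltnS.
apply: (IH (fun x => A x \/ x = p i)) => // [i' hi' hc|i' hi'].
  apply: (hind i'); first by rewrite in_cons hi' orbT.
  apply: closureS hc => x [[hx|->]|[j hj [ne <-]]]; first by left.
    right; exists i; first exact: mem_head.
    by split=> //; apply: contraNneq nis => ->.
  by right; exists j; rewrite ?in_cons ?hj ?orbT.
apply: (closure_sub_closure _ (hspan i' _)); last by rewrite in_cons hi' orbT.
move=> x [hx|]; first by apply: subset_closure; left; left.
rewrite eG => hx; case: (List.in_app_or _ _ _ hx) => [h|[<-|h]].
- by apply: subset_closure; right; apply: List.in_or_app; left.
- by apply: closureS hg => y [hy|[hy|hy]]; [left; left|right|left; right].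
- by apply: subset_closure; right; apply: List.in_or_app; right.
Qed.

Definition spanned_by (B F : P -> Prop) := Defs.subset F (cl (fun x => F x /\ B x)).

Lemma spanned_byI B F G : independent L B ->
  spanned_by B F -> spanned_by B G -> spanned_by B (fun x => F x /\ G x).
Proof.
move=> hB hF hG x [Fx Gx].
have := closureI_independent hB (fun y (h : _ /\ _) => h.2) (fun y (h : _ /\ _) => h.2)
  (hF x Fx) (hG x Gx).
by apply: closureS => y [[Fy By] [Gy _]].
Qed.

Lemma spanned_by_base B : is_base L B -> spanned_by B (fun _ => True).
Proof.
move=> [_ hB] x _; have : cl B x by rewrite hB.
by apply: closureS => y By.
Qed.

Lemma spanned_by_base_subset k B V : base_subset L k B V -> spanned_by B V.
Proof.
by move=> [_ [X [XB <-]]]; apply: closureS => x Xx; split; [apply: subset_closure | apply: XB].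
Qed.

Section ExchangeBase.
Variables (B : P -> Prop) (l : P -> Prop) (a b q : P).
Hypotheses (hB : is_base L B) (Ba : B a) (Bb : B b) (ab : a <> b).
Hypotheses (Ll : L l) (la : l a) (lb : l b) (lq : l q) (qa : q <> a) (qb : q <> b).

Let B' := fun x => (B x /\ x <> a) \/ x = q.

Lemma notin_closure_exchange X : Defs.subset X (fun x => B x /\ x <> a) -> ~ cl X q.
Proof.
move=> XB Xq; apply: (independent_notin_closure hB.1 Ba (Y := fun x => X x \/ x = b)).
  by move=> x [/XB //|->]; split=> // e; case: ab.
apply: (closure_subspace Ll qb _ _ lq lb la); last first.
  by apply: subset_closure; right.
by apply: closureS Xq => x; left.
Qed.

Lemma is_base_exchange : is_base L B'.
Proof.
split.
  by apply: independentU1 (independentS hB.1 _) (notin_closure_exchange _) => // x [].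
apply: seteq_eq => x; split=> // _; have : cl B x by rewrite hB.2.
apply: closure_sub_closure => y By; have [->|ya] := classic (y = a); last first.
  by apply: subset_closure; left.
apply: (closure_subspace Ll qb _ _ lq lb la); apply: subset_closure.
  by right.
by left; split=> // e; case: ab.
Qed.

Lemma base_subset_exchange k V : base_subset L k B V -> ~ (V a /\ ~ V b) ->
  base_subset L k B' V.
Proof.
move=> hV nab; have [hd [X [_ eV]]] := hV; split=> //.
have hS : is_subspace L V by rewrite -eV; apply: closure_subspace.
exists (fun x => V x /\ B' x); split=> [x [] //|].
apply: seteq_eq => x; split; first by apply: closure_min => // y [].
move/(spanned_by_base_subset hV); apply: closure_sub_closure => y [Vy By].
have [eya|ya] := classic (y = a); last by apply: subset_closure; split=> //; left.
subst y; have Vb : V b by apply: NNPP => nVb; apply: nab.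
have Vq : V q := hS l Ll a b ab Vy Vb la lb q lq.
apply: (closure_subspace Ll qb _ _ lq lb la); apply: subset_closure.
  by split=> //; right.
by split=> //; left; split=> // e; case: ab.
Qed.

Lemma base_subset_exchange_notin k V : V a -> ~ V b -> ~ base_subset L k B' V.
Proof.
move=> Va nVb [_ [X [XB' eV]]].
have nVq : ~ V q.
  rewrite -eV => Vq; apply: nVb; rewrite -eV.
  apply: (closure_subspace Ll qa _ _ lq la lb) => //.
  by rewrite eV.
apply: (independent_notin_closure hB.1 Ba (Y := X)); last by rewrite eV.
move=> x /[dup] Xx /XB' [//|xq]; subst x.
by case: nVq; rewrite -eV; apply: subset_closure.
Qed.

End ExchangeBase.

End Closure.

Lemma is_dim_uniq P L (S : P -> Prop) a b : is_dim L S a -> is_dim L S b -> a = b.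
Proof.
move=> [_ [[f hf] ha]] [_ [[g hg] hb]].
by case: (ltngtP a b) => // h; [case: (hb _ f h hf) | case: (ha _ g h hg)].
Qed.

Lemma is_dim_nonempty P L (S : P -> Prop) a : is_dim L S a -> exists x, S x.
Proof.
move=> [_ [[f <-] _]]; exists (f ord0); apply: subset_closure; by exists ord0.
Qed.

Lemma in_In (T : eqType) (x : T) s : x \in s -> List.In x s.
Proof. by elim: s => //= a s IH; rewrite in_cons => /orP [/eqP ->|/IH]; [left|right]. Qed.

Section BaseSpans.
Variables (P : Type) (L : (P -> Prop) -> Prop) (T : finType) (p : T -> P).
Local Notation cl := (Defs.closure L).
Hypothesis hEx : exchange_axiom L.
Hypothesis hp : injective p.
Hypothesis hB : is_base L (range_of p).

Definition span (I : {set T}) : P -> Prop := cl (fun x => exists2 i, i \in I & p i = x).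

Lemma mem_span I j : span I (p j) <-> j \in I.
Proof.
split=> [h|hj]; last by apply: subset_closure; exists j.
apply: contraT => nj; case: (independent_notin_closure hB.1 _ _ h); first by exists j.
move=> _ [i hi <-]; split; first by exists i.
by move/hp => e; subst; rewrite hi in nj.
Qed.

Lemma span0 x : ~ span set0 x.
Proof. by apply: closure_empty => y [i]; rewrite in_set0. Qed.

Lemma span_inj : injective span.
Proof.
move=> I J e; apply/setP => j.
by apply/idP/idP => /mem_span h; apply/mem_span; rewrite ?e // -e.
Qed.

Lemma span_dim I : I != set0 -> is_dim L (span I) #|I|.-1.
Proof.
move=> nI; have I_gt0 : 0 < #|I| by rewrite card_gt0.
have [i0 _] := set0Pn I nI.
split; first exact: closure_subspace.
split.
  exists (fun j : 'I_#|I|.-1.+1 => p (nth i0 (enum I) j)).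
  congr cl; apply: seteq_eq => x; split=> [[j <-]|[i hi <-]].
    exists (nth i0 (enum I) j) => //.
    by rewrite -mem_enum mem_nth // -cardE; case: j => /=; rewrite prednK.
  have hlt : index i (enum I) < #|I|.-1.+1 by rewrite prednK // cardE index_mem mem_enum.
  by exists (Ordinal hlt); rewrite /= nth_index // mem_enum.
move=> j g hj e.
suff: size (enum I) <= size (map g (enum 'I_j)).
  by rewrite size_map size_enum_ord -cardE; lia.
apply: (steinitz hEx (A := fun _ => False)) => [|i hi|i hi].
- exact: enum_uniq.
- apply: (independent_notin_closure hB.1); first by exists i.
  move=> _ [[]|[j' _ [ne <-]]]; split; first by exists j'.
  by move/hp => e'; rewrite e' eqxx in ne.
- have : span I (p i) by apply/mem_span; rewrite -mem_enum.
  rewrite -e; apply: closureS => _ [y <-]; right.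
  by apply/List.in_map/in_In; rewrite mem_enum.
Qed.

Lemma span_dimE I k : 0 < k -> is_dim L (span I) k.-1 <-> #|I| = k.
Proof.
move=> k_gt0; split=> [hd|hI].
  have [x hx] := is_dim_nonempty hd.
  have nI : I != set0 by apply/eqP => I0; rewrite I0 in hx; case: (span0 hx).
  have := is_dim_uniq hd (span_dim nI); have : 0 < #|I| by rewrite card_gt0.
  lia.
have nI : I != set0 by rewrite -card_gt0 hI.
by have := span_dim nI; rewrite hI.
Qed.

Lemma spanI I J : (fun x => span I x /\ span J x) = span (I :&: J).
Proof.
have rangeP (K : {set T}) : Defs.subset (fun x => exists2 i, i \in K & p i = x) (range_of p).
  by move=> _ [i _ <-]; exists i.
apply: seteq_eq => x; split=> [[hI hJ]|h].
  have := closureI_independent hEx hB.1 (rangeP I) (rangeP J) hI hJ.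
  apply: closureS => y [[i hi <-] [j hj /hp e]]; subst.
  by exists i; rewrite ?inE ?hi ?hj.
by split; apply: closureS h => y [i]; rewrite inE => /andP [hi hj <-]; exists i.
Qed.

Variable k : nat.
Local Notation Bk := (base_subset L k (range_of p)).

Lemma base_subsetP V : Bk V <-> exists2 I : {set T}, #|I| = k.+1 & V = span I.
Proof.
split=> [[hd [X [XB eV]]]|[I hI ->]]; last first.
  split; first exact/(span_dimE I (ltn0Sn k)).
  by exists (fun x => exists2 i, i \in I & p i = x); split=> // _ [i _ <-]; exists i.
pose I := [set i | excluded_middle_informative (V (p i))].
have eVI : V = span I.
  apply: seteq_eq => x; split.
    rewrite -{1}eV; apply: closureS => y hy; have [i ei] := XB y hy.
    exists i => //; rewrite inE; apply/sumboolP; rewrite ei -eV.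
    exact: subset_closure.
  apply: closure_min; first by rewrite -eV; apply: closure_subspace.
  by move=> y [i]; rewrite inE => /sumboolP Vi <-.
by exists I => //; apply/(span_dimE I (ltn0Sn k)); rewrite -eVI.
Qed.

Lemma adjacent_spanE I J : 0 < k ->
  adjacent L k (span I) (span J) <-> #|I :&: J| = k.
Proof. by move=> k_gt0; rewrite /adjacent spanI; apply: span_dimE. Qed.

Definition in_out (a b : T) (V : P -> Prop) := Bk V /\ V (p a) /\ ~ V (p b).

Lemma in_out_spanE a b I : in_out a b (span I) <-> [/\ #|I| = k.+1, a \in I & b \notin I].
Proof.
split=> [[/base_subsetP [J hJ /span_inj eJ] [/mem_span ha hb]]|[hI ha hb]].
  by subst J; split=> //; apply/negP => /mem_span.
split; first by apply/base_subsetP; exists I.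
by split=> [|/mem_span]; [apply/mem_span | apply/negP].
Qed.

End BaseSpans.

Section FiniteSets.
Variable T : finType.
Implicit Types A B F X Z : {set T}.

Lemma exists_subset_card F r : r <= #|F| -> exists2 S : {set T}, S \subset F & #|S| = r.
Proof.
elim: r => [|r IH] hr; first by exists set0; rewrite ?sub0set ?cards0.
have [S sSF cS] := IH (ltnW hr).
have [x xF xS] : exists2 x, x \in F & x \notin S.
  by apply/subsetPn; apply: contraTN hr => /subset_leq_card; rewrite cS -ltnNge.
exists (x |: S); last by rewrite cardsU1 xS cS.
by rewrite subUset sub1set xF.
Qed.

Lemma exists_card_between A B r : A \subset ~: B ->
  #|A| <= r -> r + #|B| <= #|T| ->
  exists Z, [/\ #|Z| = r, A \subset Z & B \subset ~: Z].
Proof.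
move=> AB hA hB.
have AB0 : A :&: B = set0.
  by apply/setP => x; rewrite !inE; apply/andP => -[/(subsetP AB)]; rewrite inE => /negbTE ->.
have cF : #|~: (A :|: B)| = #|T| - (#|A| + #|B|).
  by rewrite cardsCs setCK cardsU AB0 cards0 subn0.
have [|S sS cS] := @exists_subset_card (~: (A :|: B)) (r - #|A|); first by lia.
have AS0 : A :&: S = set0.
  by apply/setP => x; rewrite !inE; apply/andP => -[xA /(subsetP sS)]; rewrite !inE xA.
exists (A :|: S); split; first by rewrite cardsU AS0 cards0; lia.
  exact: subsetUl.
apply/subsetP => x xB; rewrite !inE negb_or; apply/andP; split.
  by apply: contraTN xB => /(subsetP AB); rewrite inE.
by apply: contraTN xB => /(subsetP sS); rewrite !inE negb_or => /andP [].
Qed.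

Lemma exists_swap A B Z : A \subset Z -> B \subset ~: Z ->
  #|A| < #|Z| -> #|B| < #|~: Z| ->
  exists Z', [/\ Z' != Z, #|Z'| = #|Z|, A \subset Z' & B \subset ~: Z'].
Proof.
move=> AZ BZ ltAZ ltBZ.
have [u uZ uA] : exists2 u, u \in Z & u \notin A.
  by apply/subsetPn; apply: contraTN ltAZ => /subset_leq_card; rewrite -leqNgt.
have [v vZ vB] : exists2 v, v \in ~: Z & v \notin B.
  by apply/subsetPn; apply: contraTN ltBZ => /subset_leq_card; rewrite -leqNgt.
rewrite inE in vZ.
exists (v |: Z :\ u); split.
- by apply: contraNneq vZ => <-; rewrite setU11.
- by rewrite cardsU1 !inE (negbTE vZ) andbF (cardsD1 u Z) uZ add1n.
- apply/subsetP => x xA; rewrite !inE (subsetP AZ) // andbT orbC.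
  by apply/orP; left; apply: contraNneq uA => <-.
apply/subsetP => x xB; rewrite !inE negb_or; apply/andP; split.
  by apply: contraNneq vB => <-.
by have := subsetP BZ x xB; rewrite !inE negb_and => ->; rewrite orbT.
Qed.

Lemma pairs_cover A B m : 0 < #|A| <= m -> m <= #|A| * #|B| ->
  exists f : 'I_m -> T * T, [/\ injective f,
    forall t, (f t).1 \in A /\ (f t).2 \in B & A \subset [set (f t).1 | t in 'I_m]].
Proof.
move=> /andP [A_gt0 leAm] lemAB.
have /card_gt0P [a0 _] := A_gt0.
pose f (t : 'I_m) := (nth a0 (enum A) (t %% #|A|), nth a0 (enum B) (t %/ #|A|)).
have tmod (t : 'I_m) : t %% #|A| < size (enum A) by rewrite -cardE ltn_pmod.
have tdiv (t : 'I_m) : t %/ #|A| < size (enum B).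
  by rewrite -cardE ltn_divLR // mulnC; apply: leq_trans lemAB.
exists f; split.
- move=> t t' [/eqP e1 /eqP e2].
  move: e1 e2; rewrite !(nth_uniq _ _ _ (enum_uniq _)) ?tmod ?tdiv // => /eqP e1 /eqP e2.
  by apply: val_inj; rewrite /= (divn_eq t #|A|) e1 e2 -divn_eq.
- by move=> t; rewrite -(mem_enum A) -(mem_enum B) !mem_nth.
apply/subsetP => x xA.
have hx : index x (enum A) < m by apply: leq_trans leAm; rewrite cardE index_mem mem_enum.
apply/imsetP; exists (Ordinal hx) => //=.
by rewrite modn_small ?nth_index ?mem_enum // cardE index_mem mem_enum.
Qed.

Lemma exists_card_in_out r a b : a != b -> 0 < r -> r < #|T| ->
  exists Z, [/\ #|Z| = r, a \in Z & b \notin Z].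
Proof.
move=> ab r_gt0 ltrT.
have [|||Z [cZ aZ bZ]] := @exists_card_between [set a] [set b] r.
- by rewrite sub1set !inE.
- by rewrite cards1.
- by rewrite cards1 addn1.
exists Z; split=> //; first by rewrite -sub1set.
by have := subsetP bZ b; rewrite !inE eqxx => /(_ isT).
Qed.

Lemma exists_card_separating r i j a b : 1 < r -> r.+2 <= #|T| ->
  i != j -> (i, j) != (a, b) ->
  exists Z, [/\ #|Z| = r, i \in Z, j \notin Z & ~~ ((a \in Z) && (b \notin Z))].
Proof.
move=> r_gt1 lerT ij ijab.
have card2 (x y : T) : #|[set x; y]| <= 2 by rewrite cardsU1 cards1; case: (_ \notin _).
have [eai|ia] := eqVneq a i.
  subst i; have jb : j != b by move: ijab; apply: contraNneq => ->.
  have [|||Z [cZ sZ jZ]] := @exists_card_between [set a; b] [set j] r.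
  - by apply/subsetP => x; rewrite !inE => /orP [] /eqP -> //; rewrite eq_sym.
  - exact: leq_trans (card2 a b) r_gt1.
  - by rewrite cards1 addn1 ltnW.
  have [aZ bZ] : a \in Z /\ b \in Z by split; apply: (subsetP sZ); rewrite !inE eqxx ?orbT.
  exists Z; split=> //; first by have := subsetP jZ j; rewrite !inE eqxx => /(_ isT).
  by rewrite bZ andbF.
have [|||Z [cZ iZ sZ]] := @exists_card_between [set i] [set j; a] r.
- by rewrite sub1set !inE negb_or ij eq_sym ia.
- by rewrite cards1 ltnW.
- by apply: leq_trans lerT; rewrite -addn2 leq_add2l card2.
have [jZ aZ] : j \notin Z /\ a \notin Z.
  by split; [have := subsetP sZ j | have := subsetP sZ a];
    rewrite !inE eqxx ?orbT => /(_ isT).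
by exists Z; split=> //; [rewrite -sub1set | rewrite (negbTE aZ)].
Qed.

Definition pins (I : Type) (h : I -> T * T) (Z0 : {set T}) := forall Z, #|Z| = #|Z0| ->
  (forall i, (h i).1 \in Z /\ (h i).2 \notin Z) <-> Z = Z0.

Lemma card_setI_lt A B : #|A| = #|B| -> A != B -> #|A :&: B| < #|A|.
Proof.
move=> cAB; apply: contraNT; rewrite -leqNgt => leAI; apply/eqP.
have /eqP AIA : A :&: B == A by rewrite eqEcard subsetIl.
apply/eqP; rewrite eqEcard cAB leqnn andbT -AIA; exact: subsetIr.
Qed.

Lemma exists_pins_through X (X' : {set T}) m :
  #|X| = #|X :&: X'|.+1 -> 0 < #|X :&: X'| <= m ->
  m <= #|X :&: X'| * #|~: (X :|: X')| ->
  exists h : 'I_m.+1 -> T * T, [/\ injective h, pins h X &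
    forall j, (h (lift ord_max j)).1 \in X' /\ (h (lift ord_max j)).2 \notin X'].
Proof.
set Y := X :&: X'; set O := ~: (X :|: X') => cX hYm lemYO.
have [g [g_inj gYO coverY]] := pairs_cover hYm lemYO.
have /andP [Y_gt0 leYm] := hYm.
have [x xX xX'] : exists2 x, x \in X & x \notin X'.
  apply/subsetPn/negP => XX'.
  have : #|X| <= #|Y| by apply: subset_leq_card; rewrite subsetI subxx XX'.
  by rewrite cX ltnn.
have /card_gt0P [o oO] : 0 < #|O|.
  have : 0 < #|Y| * #|O| by apply: leq_trans lemYO; apply: leq_trans leYm.
  by rewrite muln_gt0 => /andP [].
have gY t : (g t).1 \in Y by have [] := gYO t.
have gO t : (g t).2 \in O by have [] := gYO t.
pose h (i : 'I_m.+1) := if unlift ord_max i is Some t then g t else (x, o).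
have hX i : (h i).1 \in X /\ (h i).2 \notin X.
  rewrite /h; case: unliftP => [t _|_] /=; last by move: oO; rewrite !inE negb_or => /andP [->].
  by move: (gY t) (gO t); rewrite !inE negb_or => /andP [-> _] /andP [->].
exists h; split.
- move=> i i'; rewrite /h; case: unliftP => [t ->|->]; case: unliftP => [t' ->|->] //.
  + by move/g_inj ->.
  + by move=> e; move: (gY t); rewrite e !inE (negbTE xX') andbF.
  + by move=> e; move: (gY t'); rewrite -e !inE (negbTE xX') andbF.
- move=> Z cZ; split=> [hZ|-> //].
  have XZ : X \subset Z.
    apply/subsetP => y yX; have [yX'|nyX'] := boolP (y \in X').
      have /imsetP [t _ ->] : y \in [set (g t).1 | t in 'I_m].
        by apply: (subsetP coverY); rewrite inE yX yX'.
      by have := hZ (lift ord_max t); rewrite /h liftK => -[].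
    suff -> : y = x by have := hZ ord_max; rewrite /h unlift_none => -[].
    apply/eqP; apply: contraT => yx.
    have : #|y |: (x |: Y)| <= #|X|.
      by apply: subset_leq_card; rewrite !subUset !sub1set yX xX subsetIl.
    rewrite !cardsU1 !inE (negbTE yx) (negbTE nyX') (negbTE xX') !andbF cX /=.
    by rewrite !add1n ltnn.
  by apply/eqP; rewrite eq_sym eqEcard XZ cZ leqnn.
- move=> j; rewrite /h liftK.
  by move: (gY j) (gO j); rewrite !inE negb_or => /andP [_ ->] /andP [_ ->].
Qed.

(* The first components lie in X :&: X' up to one point, the second ones
   outside X :|: X' up to one point; if #|X :&: X'|.+1 < #|Z0|, both sets of
   components are too small to block the exchange of a point of Z0. *)
Lemma pins_card_meet (I : finType) (h : I -> T * T) i0 X (X' Z0 : {set T}) :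
  #|X| = #|Z0| -> #|X'| = #|Z0| -> pins h Z0 ->
  (forall i, i != i0 -> (h i).1 \in X :&: X' /\ (h i).2 \notin X :|: X') ->
  #|Z0| <= (#|X :&: X'|).+1.
Proof.
move=> cX cX' pin hXX'; rewrite leqNgt; apply/negP => ltI.
set A := [set (h i).1 | i in I]; set B := [set (h i).2 | i in I].
have AZ0 : A \subset Z0.
  by apply/subsetP => _ /imsetP [i _ ->]; have [] := (pin Z0 erefl).2 erefl i.
have BZ0 : B \subset ~: Z0.
  by apply/subsetP => _ /imsetP [i _ ->]; rewrite inE; have [] := (pin Z0 erefl).2 erefl i.
have leA : #|A| <= (#|X :&: X'|).+1.
  apply: (@leq_trans #|(h i0).1 |: (X :&: X')|); last by rewrite cardsU1; case: (_ \notin _).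
  apply/subset_leq_card/subsetP => _ /imsetP [i _ ->]; rewrite in_setU1.
  by have [->|/hXX' [-> _]] := eqVneq i i0; rewrite ?eqxx ?orbT.
have leB : #|B| <= (#|~: (X :|: X')|).+1.
  apply: (@leq_trans #|(h i0).2 |: ~: (X :|: X')|); last by rewrite cardsU1; case: (_ \notin _).
  apply/subset_leq_card/subsetP => _ /imsetP [i _ ->]; rewrite in_setU1 inE.
  by have [->|/hXX' [_ ->]] := eqVneq i i0; rewrite ?eqxx ?orbT.
have [||Z [ZZ0 cZ AZ BZ]] := exists_swap AZ0 BZ0; first by lia.
  move: leB; rewrite [#|~: Z0|]cardsCs [#|~: (X :|: X')|]cardsCs !setCK.
  have := cardsUI X X'; have := cardsCs (X :|: X'); lia.
by move: ZZ0; rewrite ((pin Z cZ).1) ?eqxx // => i; split;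
  [apply: (subsetP AZ) | rewrite -in_setC; apply: (subsetP BZ)]; apply: imset_f.
Qed.

End FiniteSets.

Lemma exists_third_point P (L : (P -> Prop) -> Prop) x y :
  is_linear_space L -> axiom_P2 L -> x <> y ->
  exists l q, [/\ L l, l x, l y, l q & q <> x /\ q <> y].
Proof.
move=> [_ [_ hline]] hP2 xy; have [l [Ll [lx [ly _]]]] := hline x y xy.
have [a [b [c [la [lb [lc [ab [ac bc]]]]]]]] := hP2 l Ll.
exists l; have [xya|xya] := classic (a <> x /\ a <> y); first by exists a.
have [xyb|xyb] := classic (b <> x /\ b <> y); first by exists b.
exists c; split=> //; split=> e; subst c; apply: xya; split=> e'; subst;
  by apply: xyb; split=> e'; subst.
Qed.

Section ComplementSubsets.
Variables (P : Type) (L : (P -> Prop) -> Prop) (T : finType) (p : T -> P).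
Hypothesis hEx : exchange_axiom L.
Hypothesis hL : is_linear_space L.
Hypothesis hP2 : axiom_P2 L.
Hypothesis hp : injective p.
Hypothesis hB : is_base L (range_of p).
Variable k : nat.
Local Notation Bk := (base_subset L k (range_of p)).
Local Notation in_out := (in_out L p k).

Let separates (S : Defs.family P) a b := exists2 V, S V & V (p a) /\ ~ V (p b).

(* Intersecting members of [S] through [p i] cuts out a flat containing no
   other base point, spanned both by [range_of p] and by [B']: it is [p i]. *)
Lemma base_points_of_separating B' S : is_base L B' ->
  Defs.subset S Bk -> Defs.subset S (base_subset L k B') ->
  (forall a b, a != b -> separates S a b) -> forall i, B' (p i).
Proof.
move=> hB' SB SB' hS i.
have [F [Fi FB FB' Fj]] : exists F, [/\ F (p i), spanned_by L (range_of p) F,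
    spanned_by L B' F & forall j, j \in enum T -> j != i -> ~ F (p j)].
  elim: (enum T) => [|j s [F [Fi FB FB' Fs]]].
    by exists (fun _ => True); split=> //; apply: spanned_by_base.
  have [->|ji] := eqVneq j i.
    by exists F; split=> // j'; rewrite in_cons => /orP [/eqP ->|/Fs //]; rewrite eqxx.
  have [V SV [Vi nVj]] := hS i j (ltac:(by rewrite eq_sym)).
  exists (fun x => F x /\ V x); split=> //.
  - exact: (spanned_byI hEx hB.1 FB (spanned_by_base_subset (SB V SV))).
  - exact: (spanned_byI hEx hB'.1 FB' (spanned_by_base_subset (SB' V SV))).
  - by move=> j'; rewrite in_cons => /orP [/eqP -> _ [_ /nVj]|/Fs hF /hF + [+ _]].
have [y Fy B'y] : exists2 y, F y & B' y.
  apply: NNPP => no; apply: (closure_empty _ (FB' _ Fi)) => y [Fy B'y].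
  by apply: no; exists y.
suff ->: p i = y by [].
apply: (closure_min (S := fun x => p i = x)) (FB y Fy).
  by move=> l _ a b ab ea eb; case: ab; rewrite -ea -eb.
move=> x [Fx [j ej]]; subst x; have [-> //|ji] := eqVneq j i.
by case: (Fj j (mem_enum _ _) ji Fx).
Qed.

Lemma exact_of_separating S : Defs.subset S Bk ->
  (forall a b, a != b -> separates S a b) -> exact L k Bk S.
Proof.
move=> SB hS; split=> // B' hB' SB'.
have B'p := base_points_of_separating hB' SB SB' hS.
suff ->: B' = range_of p by [].
apply: seteq_eq => x; split=> [B'x|[i <-] //].
apply: NNPP => nx; apply: (independent_notin_closure hB'.1 B'x (Y := range_of p)).
  by move=> _ [i <-]; split=> // e; apply: nx; exists i.
by rewrite hB.2.
Qed.

Lemma exactS S S' : Defs.subset S S' -> Defs.subset S' Bk ->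
  exact L k Bk S -> exact L k Bk S'.
Proof.
by move=> SS' S'B [_ hS]; split=> // B' hB' h; apply: hS hB' _ => V /SS' /h.
Qed.

(* Replacing [p a] by a third point [q] of the line through [p a] and [p b]
   gives a base whose base subset contains everything outside [in_out a b]. *)
Lemma inexact_compl_in_out a b : a != b -> (exists V, in_out a b V) ->
  inexact L k Bk (fun V => Bk V /\ ~ in_out a b V).
Proof.
move=> ab [V0 [BV0 [V0a nV0b]]]; split=> [V [] //|[_ hex]].
have pab : p a <> p b by move/hp/eqP; apply/negP.
have [l [q [Ll la lb lq [qa qb]]]] := exists_third_point hL hP2 pab.
have Ba : range_of p (p a) by exists a.
have Bb : range_of p (p b) by exists b.
have hB' := is_base_exchange hEx hB Ba Bb pab Ll la lb lq qb.
suff /(hex _ hB') /(_ V0) [_ /(_ BV0)] : Defs.subset (fun V => Bk V /\ ~ in_out a b V)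
    (base_subset L k (fun x => (range_of p x /\ x <> p a) \/ x = q)).
  exact: base_subset_exchange_notin hB Ba Ll la lb lq qa k V0 V0a nV0b.
move=> V [BV nV]; apply: (base_subset_exchange Bb pab Ll la lb lq qb BV).
by move=> [Va nVb]; apply: nV.
Qed.

Hypothesis hk0 : 0 < k.
Hypothesis hkT : k.+3 <= #|T|.

Lemma in_out_nonempty a b : a != b -> exists V, in_out a b V.
Proof.
move=> ab; have [|Z [cZ aZ bZ]] := exists_card_in_out ab (ltn0Sn k).
  exact: leq_trans (ltnW (ltnSn _)) hkT.
by exists (span L p Z); apply/(in_out_spanE hEx hp hB).
Qed.

Lemma separating_outside_in_out a b i j : i != j -> (i, j) != (a, b) ->
  exists2 V, (Bk V /\ ~ in_out a b V) & V (p i) /\ ~ V (p j).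
Proof.
move=> ij ijab; have [Z [cZ iZ jZ abZ]] := exists_card_separating (r := k.+1) hk0 hkT ij ijab.
exists (span L p Z).
  split; first by apply/(base_subsetP hEx hp hB); exists Z.
  by move/(in_out_spanE hEx hp hB) => [_ aZ bZ]; move: abZ; rewrite aZ bZ.
by split=> [|/(mem_span hp hB)]; [apply/(mem_span hp hB) | apply/negP].
Qed.

Lemma complement_in_out a b : a != b -> complement_subset L k Bk (in_out a b).
Proof.
move=> ab; split=> [V [] //|]; split; first exact: inexact_compl_in_out (in_out_nonempty ab).
move=> S CS SB [U [SU nCU]] [_ []]; apply: exact_of_separating => // i j ij.
have [[-> ->]|ijab] := eqVneq (i, j) (a, b).
  have [_ [Ua nUb]] : in_out a b U by apply: NNPP => nU; apply: nCU; split; [apply: SB|].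
  by exists U.
by have [V /CS SV hV] := separating_outside_in_out ij ijab; exists V.
Qed.

Lemma in_out_inj a b a' b' : a != b -> in_out a b = in_out a' b' -> (a, b) = (a', b').
Proof.
move=> ab e; apply/eqP; apply: contraT => abab'.
have [V [BV nV] [Va nVb]] := separating_outside_in_out ab abab'.
by exfalso; apply: nV; rewrite -e.
Qed.

(* The complement of a complement subset [R] is inexact, so it fails to
   separate some pair (a, b); maximality then forces [R = in_out a b]. *)
Lemma complement_subsetP R :
  complement_subset L k Bk R <-> exists a b, a != b /\ R = in_out a b.
Proof.
split=> [[RB [[CB nexC] hmax]]|[a [b [ab ->]]]]; last exact: complement_in_out.
have [a [b [ab nsep]]] : exists a b, a != b /\
    forall V, Bk V -> ~ R V -> ~ (V (p a) /\ ~ V (p b)).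
  apply: NNPP => h; apply: nexC; apply: exact_of_separating => // a b ab.
  apply: NNPP => nab; apply: h; exists a, b; split=> // V BV nRV hV.
  by apply: nab; exists V.
exists a, b; split=> //; apply: seteq_eq => V; split=> [RV|[BV hV]]; last first.
  by apply: NNPP => nRV; apply: nsep BV nRV hV.
have BV := RB V RV; split=> //; apply: NNPP => nV.
apply: (hmax (fun W => (Bk W /\ ~ R W) \/ W = V)) => [W|W [[]|->] //||].
- by left.
- by exists V; split; [right | case].
split=> [W [[]|->] //|hex]; apply: (inexact_compl_in_out ab (in_out_nonempty ab)).2.
apply: exactS hex => [W [[BW nRW]|->]|W []] //; split=> // - [_].
  exact: nsep.
by move=> /nV.
Qed.

End ComplementSubsets.

Section Regular.
Variables (P : Type) (L : (P -> Prop) -> Prop) (k m : nat) (Bk : Defs.family P).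

Definition extend A (Rs : 'I_m -> A) (R : A) : 'I_m.+1 -> A :=
  fun i => if unlift ord_max i is Some j then Rs j else R.

Lemma extend_lift A (Rs : 'I_m -> A) R j : extend Rs R (lift ord_max j) = Rs j.
Proof. by rewrite /extend liftK. Qed.

Lemma extend_restrict A (F : 'I_m.+1 -> A) :
  extend (fun j => F (lift ord_max j)) (F ord_max) = F.
Proof.
by apply: functional_extensionality => i; rewrite /extend; case: unliftP => [j ->|->].
Qed.

Lemma regular_of_succ Rs R : regular_succ L k Bk (extend Rs R) -> regular L k Bk Rs.
Proof.
move=> hR; have [hc [hinj _]] := hR; split; last split; last by exists R.
  by move=> j; rewrite -(extend_lift Rs R).
by move=> i j e; apply: (lift_inj (h := ord_max)); apply: hinj; rewrite !extend_lift.
Qed.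

End Regular.

Section RegularCollections.
Variables (P : Type) (L : (P -> Prop) -> Prop) (T : finType) (p : T -> P).
Hypothesis hEx : exchange_axiom L.
Hypothesis hL : is_linear_space L.
Hypothesis hP2 : axiom_P2 L.
Hypothesis hp : injective p.
Hypothesis hB : is_base L (range_of p).
Variable k : nat.
Hypothesis hk0 : 0 < k.
Hypothesis hkT : k.+3 <= #|T|.
Local Notation Bk := (base_subset L k (range_of p)).
Local Notation in_out := (in_out L p k).
Local Notation span := (span L p).

Lemma regular_succ_in_out m (h : 'I_m.+1 -> T * T) (Z0 : {set T}) :
  injective h -> #|Z0| = k.+1 -> pins h Z0 ->
  regular_succ L k Bk (fun i => in_out (h i).1 (h i).2).
Proof.
move=> h_inj cZ0 pin; have hZ0 := (pin Z0 erefl).2 erefl.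
have ab i : (h i).1 != (h i).2.
  by have [h1 h2] := hZ0 i; apply: contraNneq h2 => <-.
split; first by move=> i; apply: (complement_in_out hEx hL hP2 hp hB hk0 hkT).
split.
  move=> i j /(in_out_inj hEx hp hB hk0 hkT (ab i)) e.
  by apply: h_inj; rewrite [h i]surjective_pairing [h j]surjective_pairing.
exists (span Z0) => V; split=> [hV|-> i]; last first.
  by apply/(in_out_spanE hEx hp hB); have [] := hZ0 i; split.
have [Z cZ eV] := (base_subsetP hEx hp hB k V).1 (hV ord_max).1.
subst V; congr span; apply/(pin Z); first by rewrite cZ cZ0.
by move=> i; have /(in_out_spanE hEx hp hB) [] := hV i.
Qed.

Lemma regular_succ_pins m (F : 'I_m.+1 -> Defs.family P) : regular_succ L k Bk F ->
  exists (h : 'I_m.+1 -> T * T) (Z0 : {set T}),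
    [/\ #|Z0| = k.+1, pins h Z0 & F = fun i => in_out (h i).1 (h i).2].
Proof.
move=> [hc [_ [W hW]]].
have /fin_all_exists [h hh] : forall i, exists ab : T * T, F i = in_out ab.1 ab.2.
  move=> i; have [a [b [_ ->]]] := (complement_subsetP hEx hL hP2 hp hB hk0 hkT _).1 (hc i).
  by exists (a, b).
have eF : F = fun i => in_out (h i).1 (h i).2 by apply: functional_extensionality.
have WF i : in_out (h i).1 (h i).2 W by rewrite -hh; apply: (hW W).2.
have [Z0 cZ0 eW] := (base_subsetP hEx hp hB k W).1 (WF ord_max).1.
subst W; exists h, Z0; split=> // Z cZ; split=> [hZ|-> i]; last first.
  by have /(in_out_spanE hEx hp hB) [] := WF i.
apply: (span_inj hp hB); apply/hW => i; rewrite hh.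
by apply/(in_out_spanE hEx hp hB); have [] := hZ i; rewrite cZ cZ0.
Qed.

Lemma regular_through_spans (X X' : {set T}) m : #|X| = k.+1 -> #|X'| = k.+1 ->
  #|X :&: X'| = k -> k <= m -> m <= k * #|~: (X :|: X')| ->
  exists Rs : 'I_m -> Defs.family P,
    regular L k Bk Rs /\ forall i, Rs i (span X) /\ Rs i (span X').
Proof.
move=> cX cX' cI lekm lemO.
have [|||h [h_inj pin hX']] := @exists_pins_through _ X X' m; rewrite ?cI ?hk0 //.
have hX := (pin X erefl).2 erefl.
exists (fun j => in_out (h (lift ord_max j)).1 (h (lift ord_max j)).2); split.
  apply: (regular_of_succ (R := in_out (h ord_max).1 (h ord_max).2)).
  rewrite (extend_restrict (fun i => in_out (h i).1 (h i).2)).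
  by apply: regular_succ_in_out h_inj cX pin.
move=> j; have [hX1 hX2] := hX (lift ord_max j); have [hX'1 hX'2] := hX' j.
by split; apply/(in_out_spanE hEx hp hB).
Qed.

Lemma card_meet_of_regular m (Rs : 'I_m -> Defs.family P) (X X' : {set T}) :
  #|X| = k.+1 -> #|X'| = k.+1 -> regular L k Bk Rs ->
  (forall i, Rs i (span X) /\ Rs i (span X')) -> k <= #|X :&: X'|.
Proof.
move=> cX cX' [_ [_ [R /regular_succ_pins [h [Z0 [cZ0 pin eF]]]]]] hXX'.
rewrite -ltnS -cZ0; apply: (pins_card_meet (i0 := ord_max) _ _ pin); rewrite ?cX ?cX' //.
have eG : extend Rs R = fun i => in_out (h i).1 (h i).2 := eF.
move=> i; case: (unliftP ord_max i) => [j -> _|->]; last by rewrite eqxx.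
have [] := hXX' j; rewrite -(extend_lift Rs R j) eG.
by move=> /(in_out_spanE hEx hp hB) [_ aX bX] /(in_out_spanE hEx hp hB) [_ aX' bX'];
  rewrite !inE aX aX' negb_or bX bX'.
Qed.

End RegularCollections.

Theorem lemma2p5 (P : Type) (L : (P -> Prop) -> Prop) (n k : nat)
  (hL : is_linear_space L) (hEx : exchange_axiom L) (hP2 : axiom_P2 L)
  (hdim : is_dim L (fun _ => True) n)
  (hk0 : 0 < k) (hk1 : k < n - 1)
  (p : 'I_n.+1 -> P) (hp : injective p) (hB : is_base L (range_of p))
  (U U' : P -> Prop)
  (hU : base_subset L k (range_of p) U) (hU' : base_subset L k (range_of p) U')
  (hne : U <> U') :
  adjacent L k U U' <->
  exists Rs : 'I_(maxn k (n - k - 1)) -> ((P -> Prop) -> Prop),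
    regular L k (base_subset L k (range_of p)) Rs /\
    (forall i, Rs i U /\ Rs i U').
Proof.
have hkT : k.+3 <= #|'I_n.+1| by rewrite card_ord; lia.
have [X cX eU] := (base_subsetP hEx hp hB k U).1 hU.
have [X' cX' eU'] := (base_subsetP hEx hp hB k U').1 hU'.
subst U U'; apply: iff_trans (adjacent_spanE hEx hp hB _ _ hk0) _.
split=> [cI|[Rs [hreg hUU]]].
  apply: (regular_through_spans hEx hL hP2 hp hB hk0 hkT cX cX' cI); first by lia.
  have -> : #|~: (X :|: X')| = n - k - 1.
    by rewrite cardsCs setCK card_ord; have := cardsUI X X'; rewrite cX cX' cI; lia.
  by rewrite geq_max leq_pmulr ?leq_pmull //; lia.
have XX' : X != X' by apply/eqP => e; apply: hne; rewrite e.
apply/eqP; rewrite eqn_leq (card_meet_of_regular hEx hL hP2 hp hB hk0 hkT cX cX' hreg hUU).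
by rewrite andbT -ltnS -cX card_setI_lt ?cX ?cX'.
Qed.
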